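(* For every theory $\Sigma$ and formula $A \Rightarrow B$: $\Sigma \vdash A \Rightarrow B$ if and only if there is a finite $\Sigma' \subseteq \Sigma^{\mathrm{PL}}$ such that $\Sigma' \vdash_\mathcal{R} A \Rightarrow B$, where $\mathcal{R}$ is the deduction system consisting of (Ax) and (Cut).
   Context: $Y$ is a non-empty finite set of attributes and $\mathcal{T}_Y = \{y^i \mid y \in Y, i \in \mathbb{Z}\}$; $M + j = \{y^{i+j} \mid y^i \in M\}$. A formula is $A \Rightarrow B$ with $A,B$ finite subsets of $\mathcal{T}_Y$; a theory is a set of formulas; $\Sigma^{\mathrm{PL}} = \{A+i \Rightarrow B+i \mid A \Rightarrow B \in \Sigma, i \in \mathbb{Z}\}$. Deduction rules (for arbitrary finite $A,B,C,D \subseteq \mathcal{T}_Y$, $i \in \mathbb{Z}$): (Ax) infer $A \cup B \Rightarrow A$; (Cut) from $A \Rightarrow B$ and $B \cup C \Rightarrow D$ infer $A \cup C \Rightarrow D$; (Shf) from $A \Rightarrow B$ infer $A+i \Rightarrow B+i$. For a set of rules $\mathcal{R}$, an $\mathcal{R}$-proof of $A \Rightarrow B$ by $\Sigma$ is a finite sequence of formulas ending with $A \Rightarrow B$ in which each member is in $\Sigma$ or is the conclusion of a rule in $\mathcal{R}$ whose hypotheses occur earlier; $\Sigma \vdash_\mathcal{R} A \Rightarrow B$ means such a proof exists, and $\Sigma \vdash A \Rightarrow B$ denotes $\vdash_\mathcal{R}$ for $\mathcal{R}$ = \{(Ax), (Cut), (Shf)\}. *)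

From Stdlib Require List.
From mathcomp Require Import all_boot all_algebra.
From mathcomp Require Import finmap.
Set Implicit Arguments. Unset Strict Implicit. Unset Printing Implicit Defensive.
Import GRing.Theory.
Local Open Scope fset_scope.

(* Attributes Y : a finite (nonempty) type; time-stamped attributes y^i are pairs (y, i). *)
Definition tattr (Y : finType) := (Y * int)%type.

Definition formula (Y : finType) := ({fset tattr Y} * {fset tattr Y})%type.

Definition theory (Y : finType) := formula Y -> Prop.

Definition shiftset (Y : finType) (M : {fset tattr Y}) (j : int) : {fset tattr Y} :=
  [fset (x.1, (x.2 + j)%R) | x in M].

Definition PL (Y : finType) (S : theory Y) : theory Y :=
  fun f => exists A B (i : int), S (A, B) /\ f = (shiftset A i, shiftset B i).

Definition rule_Ax (Y : finType) (prev : seq (formula Y)) (f : formula Y) : Prop :=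
  exists A B : {fset tattr Y}, f = (A `|` B, A).

Definition rule_Cut (Y : finType) (prev : seq (formula Y)) (f : formula Y) : Prop :=
  exists A B C D : {fset tattr Y},
    List.In (A, B) prev /\ List.In (B `|` C, D) prev /\ f = (A `|` C, D).

Definition rule_Shf (Y : finType) (prev : seq (formula Y)) (f : formula Y) : Prop :=
  exists (A B : {fset tattr Y}) (i : int),
    List.In (A, B) prev /\ f = (shiftset A i, shiftset B i).

Definition rule (Y : finType) := seq (formula Y) -> formula Y -> Prop.

Fixpoint is_proof_rev (Y : finType) (R : list (rule Y)) (S : theory Y)
    (p : seq (formula Y)) : Prop :=
  match p with
  | [::] => True
  | f :: prev => is_proof_rev R S prev /\
      (S f \/ exists r, List.In r R /\ r prev f)
  end.

(* R-proof of f by S: a finite nonempty sequence ending with f. *)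
Definition provable (Y : finType) (R : list (rule Y)) (S : theory Y) (f : formula Y) : Prop :=
  exists p : seq (formula Y), is_proof_rev R S (f :: p).

Definition R_full (Y : finType) : list (rule Y) := [:: @rule_Ax Y; @rule_Cut Y; @rule_Shf Y].
Definition R_AxCut (Y : finType) : list (rule Y) := [:: @rule_Ax Y; @rule_Cut Y].

Definition theory_of_seq (Y : finType) (s : seq (formula Y)) : theory Y :=
  fun f => f \in s.

(* A proof with (Ax), (Cut) and (Shf) can be replayed shift by shift: pushing every (Shf) up to the leaves
   turns it into an (Ax)/(Cut) proof whose leaves are shifted members of
   Sigma, i.e. finitely many formulas of Sigma^PL.  Conversely each member of
   Sigma^PL is one (Shf) step away from Sigma, and (Ax), (Cut) are available
   in the full system, so an (Ax)/(Cut) proof from Sigma^PL is replayed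
   verbatim. *)

From mathcomp Require Import all_boot all_algebra.
From mathcomp Require Import finmap.
Set Warnings "-notation-overridden,-ambiguous-paths,-notation-incompatible-prefix".
Set Implicit Arguments. Unset Strict Implicit. Unset Printing Implicit Defensive.
Import GRing.Theory.
Local Open Scope fset_scope.

Section Shifts.
Variable Y : finType.
Implicit Types (M N : {fset tattr Y}) (i j : int).

Lemma shiftsetU M N i : shiftset (M `|` N) i = shiftset M i `|` shiftset N i.
Proof. by rewrite /shiftset imfsetU. Qed.

Lemma shiftsetD M i j : shiftset (shiftset M i) j = shiftset M (i + j)%R.
Proof.
apply/fsetP => x; apply/imfsetP/imfsetP => [[_ /imfsetP [y /= My ->] ->]|[y /= My ->]].
  by exists y; rewrite //= addrA.
by exists (y.1, (y.2 + i)%R); [apply/imfsetP; exists y | rewrite /= addrA].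
Qed.

Lemma shiftset0 M : shiftset M 0 = M.
Proof.
apply/fsetP => x; apply/imfsetP/idP => [[y /= My ->]|Mx].
  by rewrite addr0 -surjective_pairing.
by exists x; rewrite //= addr0 -surjective_pairing.
Qed.

Definition shift_formula (f : formula Y) i : formula Y :=
  (shiftset f.1 i, shiftset f.2 i).

Lemma shift_formulaD f i j :
  shift_formula (shift_formula f i) j = shift_formula f (i + j)%R.
Proof. by rewrite /shift_formula /= !shiftsetD. Qed.

Lemma shift_formula0 f : shift_formula f 0 = f.
Proof. by case: f => M N; rewrite /shift_formula /= !shiftset0. Qed.

End Shifts.

Section Proofs.
Variable Y : finType.
Implicit Types (R : list (rule Y)) (T : theory Y) (p : seq (formula Y))
  (A B C D : {fset tattr Y}) (f : formula Y).

Definition monotone_rule (r : rule Y) :=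
  forall prev l f, r prev f -> r (prev ++ l) f.

Definition monotone_rules R := forall r, List.In r R -> monotone_rule r.

Lemma is_proof_rev_ind {R T} {P : formula Y -> Prop} {p} :
  is_proof_rev R T p ->
  (forall f, T f -> P f) ->
  (forall r prev f, List.In r R -> r prev f ->
     (forall g, List.In g prev -> P g) -> P f) ->
  forall g, List.In g p -> P g.
Proof.
move=> + PT Prule; elim: p => [|f p IHp] //= [pp Hf] g [<-|pg]; last exact: IHp.
by case: Hf => [/PT //|[r [Rr rf]]]; apply: (Prule r p) => // h /(IHp pp).
Qed.

Lemma provable_ind {R T} {P : formula Y -> Prop} {f} :
  provable R T f ->
  (forall g, T g -> P g) ->
  (forall r prev g, List.In r R -> r prev g ->
     (forall h, List.In h prev -> P h) -> P g) ->
  P f.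
Proof. by move=> [p pf] PT Prule; apply: (is_proof_rev_ind pf PT Prule); left. Qed.

Lemma is_proof_rev_cat R T p1 p2 : monotone_rules R ->
  is_proof_rev R T p1 -> is_proof_rev R T p2 -> is_proof_rev R T (p1 ++ p2).
Proof.
move=> monR; elim: p1 => [|f p1 IHp] //= [pp1 Hf] pp2; split; first exact: IHp.
by case: Hf => [Tf|[r [Rr rf]]]; [left | right; exists r; split; last exact: monR].
Qed.

Lemma provable_weaken R T T' f :
  (forall g, T g -> T' g) -> provable R T f -> provable R T' f.
Proof.
move=> TT' [p pp]; exists p; elim: (f :: p) pp => [|g q IHq] //= [pq Hg].
by split; [exact: IHq | case: Hg => [/TT'|]; [left | right]].
Qed.

Lemma provable_hyp R T f : T f -> provable R T f.
Proof. by exists [::]; split => //; left. Qed.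

Lemma provable_Ax R T A B :
  List.In (@rule_Ax Y) R -> provable R T (A `|` B, A).
Proof. by move=> RAx; exists [::]; split => //; right; exists (@rule_Ax Y); split; last exists A, B. Qed.

Lemma provable_Cut R T A B C D :
  monotone_rules R -> List.In (@rule_Cut Y) R ->
  provable R T (A, B) -> provable R T (B `|` C, D) -> provable R T (A `|` C, D).
Proof.
move=> monR RCut [p1 pp1] [p2 pp2].
exists (((A, B) :: p1) ++ ((B `|` C, D) :: p2)); split.
  exact: is_proof_rev_cat.
right; exists (@rule_Cut Y); split => //; exists A, B, C, D.
split; first by left.
by split => //; right; apply: List.in_or_app; right; left.
Qed.

Lemma provable_Shf R T A B i :
  List.In (@rule_Shf Y) R -> provable R T (A, B) ->
  provable R T (shiftset A i, shiftset B i).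
Proof.
move=> RShf [p pp]; exists ((A, B) :: p); split => //.
by right; exists (@rule_Shf Y); split; last by exists A, B, i; split; first left.
Qed.

Lemma rule_Ax_monotone : monotone_rule (@rule_Ax Y).
Proof. by []. Qed.

Lemma rule_Cut_monotone : monotone_rule (@rule_Cut Y).
Proof.
move=> prev l f [A [B [C [D [AB [BCD ->]]]]]]; exists A, B, C, D.
by rewrite !List.in_app_iff; split; [left | split; [left|]].
Qed.

Lemma rule_Shf_monotone : monotone_rule (@rule_Shf Y).
Proof.
move=> prev l f [A [B [i [AB ->]]]]; exists A, B, i.
by rewrite List.in_app_iff; split; [left|].
Qed.

Lemma R_full_monotone : monotone_rules (R_full Y).
Proof.
move=> r /= [<-|[<-|[<-|[]]]];
  [exact: rule_Ax_monotone | exact: rule_Cut_monotone | exact: rule_Shf_monotone].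
Qed.

Lemma R_AxCut_monotone : monotone_rules (R_AxCut Y).
Proof. by move=> r /= [<-|[<-|[]]]; [exact: rule_Ax_monotone | exact: rule_Cut_monotone]. Qed.

End Proofs.

Section Translation.
Variables (Y : finType) (S : theory Y).
Implicit Types (A B C D : {fset tattr Y}) (f : formula Y).

Definition finitely_PL_derivable f :=
  exists S' : seq (formula Y), (forall g, g \in S' -> PL S g) /\
    provable (R_AxCut Y) (theory_of_seq S') f.

Lemma finitely_PL_derivable_PL f : PL S f -> finitely_PL_derivable f.
Proof.
move=> PLf; exists [:: f]; split; last by apply: provable_hyp; rewrite /theory_of_seq inE.
by move=> g; rewrite inE => /eqP ->.
Qed.

Lemma finitely_PL_derivable_Ax A B : finitely_PL_derivable (A `|` B, A).
Proof. by exists [::]; split => //; apply: provable_Ax; left. Qed.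

Lemma finitely_PL_derivable_Cut A B C D :
  finitely_PL_derivable (A, B) -> finitely_PL_derivable (B `|` C, D) ->
  finitely_PL_derivable (A `|` C, D).
Proof.
move=> [S1 [PLS1 pr1]] [S2 [PLS2 pr2]]; exists (S1 ++ S2); split.
  by move=> g; rewrite mem_cat => /orP[/PLS1|/PLS2].
apply: provable_Cut; [exact: R_AxCut_monotone | by right; left | |];
  apply: provable_weaken; [|exact: pr1| |exact: pr2];
  by move=> g; rewrite /theory_of_seq mem_cat => ->; rewrite ?orbT.
Qed.

Lemma provable_full_shifts_finitely_PL_derivable f :
  provable (R_full Y) S f -> forall i, finitely_PL_derivable (shift_formula f i).
Proof.
move=> prf.
apply: (provable_ind (P := fun g => forall i, finitely_PL_derivable (shift_formula g i)) prf).
  by move=> [C D] SCD i; apply: finitely_PL_derivable_PL; exists C, D, i.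
move=> r prev g /= [<-|[<-|[<-|[]]]].
- move=> [C [D ->]] _ i; rewrite /shift_formula /= shiftsetU.
  exact: finitely_PL_derivable_Ax.
- move=> [C [D [E [F [CD [DEF ->]]]]]] IH i; rewrite /shift_formula /= shiftsetU.
  apply: finitely_PL_derivable_Cut (IH _ CD i) _.
  by move: (IH _ DEF i); rewrite /shift_formula /= shiftsetU.
- move=> [C [D [j [CD ->]]]] IH i.
  by rewrite -[(shiftset C j, _)]/(shift_formula (C, D) j) shift_formulaD; exact: IH.
Qed.

Lemma provable_full_PL f : PL S f -> provable (R_full Y) S f.
Proof.
move=> [C [D [i [SCD ->]]]]; apply: provable_Shf; first by right; right; left.
exact: provable_hyp.
Qed.

Lemma provable_AxCut_full (T : theory Y) f :
  (forall g, T g -> provable (R_full Y) S g) ->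
  provable (R_AxCut Y) T f -> provable (R_full Y) S f.
Proof.
move=> TS prf; apply: (provable_ind prf) => // r prev g /= [<-|[<-|[]]].
  by move=> [C [D ->]] _; apply: provable_Ax; left.
move=> [C [D [E [F [CD [DEF ->]]]]]] IH.
apply: provable_Cut (IH _ CD) (IH _ DEF); [exact: R_full_monotone | by right; left].
Qed.

End Translation.

Theorem theorem9 (Y : finType) (HY : 0 < #|Y|) (S : theory Y) (A B : {fset tattr Y}) :
  provable (R_full Y) S (A, B) <->
  exists S' : seq (formula Y),
    (forall f, f \in S' -> PL S f) /\
    provable (R_AxCut Y) (theory_of_seq S') (A, B).
Proof.
split=> [prAB | [S' [PLS' prAB]]].
  by rewrite -[(A, B)]shift_formula0; exact: provable_full_shifts_finitely_PL_derivable.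
apply: provable_AxCut_full prAB => g S'g.
exact/provable_full_PL/PLS'.
Qed.
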